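(* Let $A$ and $B$ be nonempty closed subsets of a complete metric space $(X,\rho)$ such that the ordered pair $(A,B)$ has the $BUC$ property. Let $T:A\cup B\to A\cup B$ be a cyclic map and suppose there exists $k\in(0,1)$ such that $$\rho(Tx,Ty)\le k\max\{\rho(x,y),\rho(x,Tx),\rho(y,Ty)\}+(1-k)\,\mathrm{dist}(A,B)\quad\text{for all }x\in A,\ y\in B.$$ Then $T$ has a unique best proximity point $x$ in $A$, and for every $x_0\in A$ the sequence $\{T^{2n}x_0\}_{n=1}^\infty$ converges to $x$. Moreover $T$ has at least one best proximity point in $B$, and if the ordered pair $(B,A)$ also has the $BUC$ property, this best proximity point in $B$ is unique.
   Context: $\mathrm{dist}(A,B)=\inf\{\rho(a,b):a\in A,\ b\in B\}$. A map $T:A\cup B\to A\cup B$ is cyclic if $T(A)\subseteq B$ and $T(B)\subseteq A$. A point $x\in A$ (resp. $x\in B$) is a best proximity point of $T$ in $A$ (resp. in $B$) if $\rho(x,Tx)=\mathrm{dist}(A,B)$. The ordered pair $(A,B)$ has the bounded $UC$ property ($BUC$) if for all bounded sequences $\{x_n\},\{z_n\}\subset A$ and every sequence $\{y_n\}\subset B$ with $\lim_n\rho(x_n,y_n)=\lim_n\rho(z_n,y_n)=\mathrm{dist}(A,B)$ one has $\lim_n\rho(x_n,z_n)=0$; the property for $(B,A)$ is defined with the roles of $A$ and $B$ interchanged. *)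

From Stdlib Require Import Reals.
Open Scope R_scope.

Definition is_metric {X : Type} (d : X -> X -> R) : Prop :=
  (forall x y, 0 <= d x y) /\
  (forall x y, d x y = 0 <-> x = y) /\
  (forall x y, d x y = d y x) /\
  (forall x y z, d x z <= d x y + d y z).

Definition converges {X : Type} (d : X -> X -> R) (u : nat -> X) (x : X) : Prop :=
  forall eps, 0 < eps -> exists N, forall n, (N <= n)%nat -> d (u n) x < eps.

Definition cauchy_seq {X : Type} (d : X -> X -> R) (u : nat -> X) : Prop :=
  forall eps, 0 < eps -> exists N, forall m n, (N <= m)%nat -> (N <= n)%nat ->
    d (u m) (u n) < eps.

Definition complete_metric {X : Type} (d : X -> X -> R) : Prop :=
  forall u, cauchy_seq d u -> exists x, converges d u x.

Definition closed_subset {X : Type} (d : X -> X -> R) (A : X -> Prop) : Prop :=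
  forall u x, (forall n, A (u n)) -> converges d u x -> A x.

Definition nonempty {X : Type} (A : X -> Prop) : Prop := exists x, A x.

Definition bounded_seq {X : Type} (d : X -> X -> R) (u : nat -> X) : Prop :=
  exists M, forall m n, d (u m) (u n) <= M.

Definition is_dist {X : Type} (d : X -> X -> R) (A B : X -> Prop) (delta : R) : Prop :=
  (forall a b, A a -> B b -> delta <= d a b) /\
  (forall m, (forall a b, A a -> B b -> m <= d a b) -> m <= delta).

Definition BUC {X : Type} (d : X -> X -> R) (A B : X -> Prop) : Prop :=
  forall delta, is_dist d A B delta ->
  forall (x z y : nat -> X),
    bounded_seq d x -> bounded_seq d z ->
    (forall n, A (x n)) -> (forall n, A (z n)) -> (forall n, B (y n)) ->
    Un_cv (fun n => d (x n) (y n)) delta ->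
    Un_cv (fun n => d (z n) (y n)) delta ->
    Un_cv (fun n => d (x n) (z n)) 0.

Definition cyclic_map {X : Type} (A B : X -> Prop) (T : X -> X) : Prop :=
  (forall x, A x -> B (T x)) /\ (forall x, B x -> A (T x)).

(* Write delta = dist(A,B) and call p, q "opposite" when one lies in A and the
   other in B.  The contraction hypothesis, symmetrised to all opposite pairs,
   gives for every p in A u B the step estimate
       d(Tp, T^2 p) <= k d(p, Tp) + (1 - k) delta,
   so d(T^n p, T^(n+1) p) - delta decays like k^n; the same argument makes
   d(T^j p, T^j q) - delta decay like k^j for opposite p, q.
   For x0 in A the even orbit u_n = T^(2n) x0 lies in A, is bounded, and is
   uniformly delta-close to the odd orbit T^(2n+1) x0 in B; the BUC property
   turns this into the Cauchy property (BUC_cauchy).  Its limit x is a best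
   proximity point (bpp_of_approximation).  BUC applied to constant sequences
   (BUC_proximal_unique) shows that best proximity points in A satisfy
   T^2 x = x and are unique; T x is then a best proximity point in B, and the
   uniqueness statement in B is the same lemma with the roles of A and B swapped. *)

From Stdlib Require Import Reals Lra Lia Classical ClassicalEpsilon.
Open Scope R_scope.

Section MetricFacts.
Context {X : Type} {d : X -> X -> R}.
Hypothesis Hd : is_metric d.

Lemma dist_nonneg x y : 0 <= d x y.
Proof. apply Hd. Qed.

Lemma dist_sym x y : d x y = d y x.
Proof. apply Hd. Qed.

Lemma dist_triangle x y z : d x z <= d x y + d y z.
Proof. apply Hd. Qed.

Lemma dist_eq0 x y : d x y = 0 -> x = y.
Proof. apply Hd. Qed.

Lemma dist_refl x : d x x = 0.
Proof. apply Hd. reflexivity. Qed.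

Lemma bounded_const (a : X) : bounded_seq d (fun _ => a).
Proof. exists 0. intros. rewrite dist_refl. lra. Qed.

End MetricFacts.

Lemma Un_cv_const (c : R) : Un_cv (fun _ => c) c.
Proof.
  intros eps Heps. exists 0%nat. intros n _.
  unfold R_dist. rewrite Rminus_diag, Rabs_R0. exact Heps.
Qed.

Lemma pow_unit_interval k n : 0 <= k <= 1 -> 0 <= k ^ n <= 1.
Proof. intros Hk. induction n; simpl; [lra | split; nra]. Qed.

Lemma geometric_small k c eps : 0 <= k < 1 -> 0 <= c -> 0 < eps ->
  exists N, forall i, (N <= i)%nat -> k ^ i * c < eps.
Proof.
  intros Hk Hc Heps.
  assert (Hpos : 0 < eps / (c + 1)) by (apply Rdiv_lt_0_compat; lra).
  destruct (pow_lt_1_zero k ltac:(rewrite Rabs_pos_eq; lra) _ Hpos) as [N HN].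
  exists N. intros i Hi. specialize (HN i Hi).
  rewrite Rabs_pos_eq in HN by (apply pow_le; lra).
  assert (Hmul : k ^ i * (c + 1) < eps) by
    (apply (Rmult_lt_compat_r (c + 1)) in HN; [|lra];
     replace (eps / (c + 1) * (c + 1)) with eps in HN by (field; lra); exact HN).
  pose proof (pow_le k i ltac:(lra)). nra.
Qed.

Lemma iter_odd {Y : Type} (f : Y -> Y) m y :
  Nat.iter (2 * m + 1) f y = f (Nat.iter (2 * m) f y).
Proof. replace (2 * m + 1)%nat with (S (2 * m)) by lia. reflexivity. Qed.

Lemma iter_even_succ {Y : Type} (f : Y -> Y) m y :
  Nat.iter (2 * S m) f y = f (Nat.iter (2 * m + 1) f y).
Proof. replace (2 * S m)%nat with (S (2 * m + 1)) by lia. reflexivity. Qed.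

Section BUCConsequences.
Context {X : Type} {d : X -> X -> R} {A B : X -> Prop} {delta : R}.
Hypotheses (Hd : is_metric d) (Hdist : is_dist d A B delta) (Hbuc : BUC d A B).

Lemma BUC_proximal_unique a b c :
  A a -> A b -> B c -> d a c = delta -> d b c = delta -> a = b.
Proof.
  intros Aa Ab Bc Hac Hbc.
  assert (Hab : Un_cv (fun _ : nat => d a b) 0).
  { apply (Hbuc delta Hdist (fun _ => a) (fun _ => b) (fun _ => c));
      try apply (bounded_const Hd); auto.
    - rewrite Hac. apply Un_cv_const.
    - rewrite Hbc. apply Un_cv_const. }
  apply (dist_eq0 Hd). exact (UL_sequence _ _ _ (Un_cv_const _) Hab).
Qed.

(* A bounded sequence in A which is uniformly asymptotically delta-close to a
   sequence in B is Cauchy: otherwise two subsequences at distance >= eps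
   would both approach a common sequence in B, contradicting BUC. *)
Lemma BUC_cauchy (u v : nat -> X) :
  (forall n, A (u n)) -> (forall n, B (v n)) -> bounded_seq d u ->
  (forall eps, 0 < eps -> exists N, forall m n, (N <= m)%nat -> (N <= n)%nat ->
     d (u m) (v n) < delta + eps) ->
  cauchy_seq d u.
Proof.
  intros Au Bv [M HM] Hclose eps Heps. apply NNPP. intro Hnot.
  assert (Hbad : forall N, exists mn : nat * nat, (N <= fst mn)%nat /\
            (N <= snd mn)%nat /\ eps <= d (u (fst mn)) (u (snd mn))).
  { intro N. apply NNPP. intro HN. apply Hnot. exists N. intros m n Hm Hn.
    apply Rnot_le_lt. intro Hle. apply HN. exists (m, n). auto. }
  destruct (choice _ Hbad) as [f Hf].
  assert (Hsub_cv : forall g : nat -> nat, (forall j, (j <= g j)%nat) ->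
            Un_cv (fun j => d (u (g j)) (v (snd (f j)))) delta).
  { intros g Hg e He. destruct (Hclose e He) as [N HN]. exists N. intros j Hj.
    destruct (Hf j) as [_ [Hsnd _]].
    pose proof (HN (g j) (snd (f j)) ltac:(specialize (Hg j); lia) ltac:(lia)).
    pose proof (proj1 Hdist (u (g j)) (v (snd (f j))) (Au _) (Bv _)).
    unfold R_dist. apply Rabs_def1; lra. }
  assert (Hsplit : Un_cv (fun j => d (u (fst (f j))) (u (snd (f j)))) 0).
  { apply (Hbuc delta Hdist _ _ (fun j => v (snd (f j))));
      try (exists M; intros; apply HM); auto;
      apply Hsub_cv; intro j; apply (Hf j). }
  destruct (Hsplit eps Heps) as [J HJ]. specialize (HJ J (le_n J)).
  unfold R_dist in HJ. rewrite Rminus_0_r, Rabs_pos_eq in HJ by apply (dist_nonneg Hd).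
  destruct (Hf J) as [_ [_ HJ']]. lra.
Qed.

End BUCConsequences.

Definition opposite {X : Type} (A B : X -> Prop) (p q : X) : Prop :=
  (A p /\ B q) \/ (B p /\ A q).

Definition cyclic_contraction {X : Type} (d : X -> X -> R) (A B : X -> Prop)
  (T : X -> X) (k delta : R) : Prop :=
  forall p q, opposite A B p q ->
    d (T p) (T q) <= k * Rmax (d p q) (Rmax (d p (T p)) (d q (T q))) + (1 - k) * delta.

Lemma cyclic_contraction_of_AB {X : Type} (d : X -> X -> R) A B T k delta :
  is_metric d ->
  (forall x y, A x -> B y ->
     d (T x) (T y) <= k * Rmax (d x y) (Rmax (d x (T x)) (d y (T y))) + (1 - k) * delta) ->
  cyclic_contraction d A B T k delta.
Proof.
  intros Hd Hc p q [[Ap Bq] | [Bp Aq]].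
  - auto.
  - rewrite (dist_sym Hd (T p)), (dist_sym Hd p), (Rmax_comm (d p (T p))). auto.
Qed.

Lemma cyclic_contraction_swap {X : Type} (d : X -> X -> R) A B T k delta :
  cyclic_contraction d A B T k delta -> cyclic_contraction d B A T k delta.
Proof. intros Hc p q Hpq. apply Hc. unfold opposite in *. tauto. Qed.

Lemma is_dist_swap {X : Type} (d : X -> X -> R) A B delta :
  is_metric d -> is_dist d A B delta -> is_dist d B A delta.
Proof.
  intros Hd [Hlow Hgreat]. split.
  - intros b a Bb Aa. rewrite (dist_sym Hd). auto.
  - intros m Hm. apply Hgreat. intros a b Aa Bb. rewrite (dist_sym Hd). auto.
Qed.

Lemma cyclic_map_swap {X : Type} (A B : X -> Prop) T :
  cyclic_map A B T -> cyclic_map B A T.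
Proof. intros [HA HB]. split; auto. Qed.

Section CyclicOrbits.
Context {X : Type} {d : X -> X -> R} {A B : X -> Prop} {T : X -> X} {k delta : R}.
Hypotheses (Hd : is_metric d) (Hcyc : cyclic_map A B T) (Hk : 0 < k < 1)
  (Hdist : is_dist d A B delta) (Hcontr : cyclic_contraction d A B T k delta).

Lemma delta_le_opposite p q : opposite A B p q -> delta <= d p q.
Proof.
  intros [[Ap Bq] | [Bp Aq]].
  - exact (proj1 Hdist p q Ap Bq).
  - rewrite (dist_sym Hd). exact (proj1 Hdist q p Aq Bp).
Qed.

Lemma delta_nonneg : 0 <= delta.
Proof. apply (proj2 Hdist). intros. apply (dist_nonneg Hd). Qed.

Lemma opposite_step p : A p \/ B p -> opposite A B p (T p).
Proof. destruct Hcyc as [HA HB]. intros [Ap | Bp]; [left | right]; auto. Qed.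

Lemma opposite_iter p q n : opposite A B p q ->
  opposite A B (Nat.iter n T p) (Nat.iter n T q).
Proof.
  destruct Hcyc as [HA HB]. intros Hpq.
  induction n as [| n IH]; [exact Hpq |].
  destruct IH as [[Ap Bq] | [Bp Aq]]; [right | left]; simpl; auto.
Qed.

Lemma union_iter p n : A p \/ B p -> A (Nat.iter n T p) \/ B (Nat.iter n T p).
Proof.
  destruct Hcyc as [HA HB]. intros Hp.
  induction n as [| n IH]; [exact Hp |]. simpl. destruct IH; auto.
Qed.

Lemma parity_iter p m : A p ->
  A (Nat.iter (2 * m) T p) /\ B (Nat.iter (2 * m + 1) T p).
Proof.
  destruct Hcyc as [HA HB]. intros Ap. rewrite iter_odd.
  induction m as [| m IH]; [simpl; auto |].
  rewrite iter_even_succ, iter_odd. destruct IH. auto.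
Qed.

Lemma contraction_le p q M : opposite A B p q ->
  d p q <= M -> d p (T p) <= M -> d q (T q) <= M ->
  d (T p) (T q) <= k * M + (1 - k) * delta.
Proof.
  intros Hpq H1 H2 H3.
  assert (Hmax : Rmax (d p q) (Rmax (d p (T p)) (d q (T q))) <= M)
    by (apply Rmax_lub; [| apply Rmax_lub]; assumption).
  pose proof (Hcontr p q Hpq). pose proof (Rmult_le_compat_l k _ _ ltac:(lra) Hmax).
  lra.
Qed.

Lemma step_contraction p : A p \/ B p ->
  d (T p) (T (T p)) <= k * d p (T p) + (1 - k) * delta.
Proof.
  intros Hp.
  assert (Hop : opposite A B p (T p)) by exact (opposite_step p Hp).
  assert (Hlow : delta <= d p (T p)) by exact (delta_le_opposite _ _ Hop).
  destruct (Rle_dec (d (T p) (T (T p))) (d p (T p))) as [Hle | Hgt].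
  - apply (contraction_le p (T p)); [exact Hop | lra | lra | lra].
  - exfalso.
    assert (Hself : d (T p) (T (T p)) <= k * d (T p) (T (T p)) + (1 - k) * delta)
      by (apply (contraction_le p (T p)); [exact Hop | lra | lra | lra]).
    nra.
Qed.

Lemma step_decay p n : A p \/ B p ->
  d (Nat.iter n T p) (Nat.iter (S n) T p) <= delta + k ^ n * (d p (T p) - delta).
Proof.
  intros Hp. induction n as [| n IH]; [simpl; lra |].
  pose proof (step_contraction _ (union_iter p n Hp)) as Hstep.
  change (Nat.iter (S (S n)) T p) with (T (T (Nat.iter n T p))).
  change (Nat.iter (S n) T p) with (T (Nat.iter n T p)) in *.
  pose proof (Rmult_le_compat_l k _ _ ltac:(lra) IH).
  simpl pow. nra.
Qed.

Lemma step_bound p n : A p \/ B p ->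
  d (Nat.iter n T p) (Nat.iter (S n) T p) <= d p (T p).
Proof.
  intros Hp. pose proof (step_decay p n Hp).
  pose proof (pow_unit_interval k n ltac:(lra)).
  pose proof (delta_le_opposite _ _ (opposite_step p Hp)). nra.
Qed.

Lemma pair_decay p q c : opposite A B p q -> 0 <= c ->
  d p q <= delta + c -> d p (T p) <= delta + c -> d q (T q) <= delta + c ->
  forall j, d (Nat.iter j T p) (Nat.iter j T q) <= delta + k ^ j * c.
Proof.
  intros Hpq Hc Hpq_c Hp Hq.
  assert (Hstep : forall x j, A x \/ B x -> d x (T x) <= delta + c ->
            d (Nat.iter j T x) (T (Nat.iter j T x)) <= delta + k ^ j * c).
  { intros x j Hx Hxc. pose proof (step_decay x j Hx).
    pose proof (pow_unit_interval k j ltac:(lra)). simpl in *. nra. }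
  assert (Up : A p \/ B p) by (destruct Hpq as [[] | []]; auto).
  assert (Uq : A q \/ B q) by (destruct Hpq as [[] | []]; auto).
  intro j. induction j as [| j IH]; [simpl; lra |].
  simpl Nat.iter. simpl pow.
  pose proof (contraction_le _ _ (delta + k ^ j * c) (opposite_iter p q j Hpq) IH
    (Hstep p j Up Hp) (Hstep q j Uq Hq)).
  nra.
Qed.

Lemma image_distance_bound p q D : opposite A B p q ->
  d p (T p) <= D -> d q (T q) <= D ->
  (1 - k) * d (T p) (T q) <= 2 * k * D + (1 - k) * delta.
Proof.
  intros Hpq Hp Hq.
  pose proof (dist_nonneg Hd p (T p)). pose proof (dist_nonneg Hd (T p) (T q)).
  assert (Hpq_le : d p q <= 2 * D + d (T p) (T q)).
  { pose proof (dist_triangle Hd p (T p) q). pose proof (dist_triangle Hd (T p) (T q) q).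
    rewrite (dist_sym Hd (T q) q) in *. lra. }
  pose proof (contraction_le p q (2 * D + d (T p) (T q)) Hpq Hpq_le ltac:(lra) ltac:(lra)).
  nra.
Qed.

Lemma even_orbit_bounded x0 : A x0 ->
  exists E, d x0 (T x0) <= E /\
    (forall m n, d (Nat.iter (2 * m) T x0) (Nat.iter (2 * n) T x0) <= E) /\
    (forall m n, d (Nat.iter (2 * m) T x0) (Nat.iter (2 * n + 1) T x0) <= delta + E).
Proof.
  intros Ax0. pose proof (dist_nonneg Hd x0 (T x0)) as HD0. pose proof delta_nonneg.
  set (D0 := d x0 (T x0)) in *. set (K := (2 * D0 + delta) / (1 - k)).
  assert (HK : forall n, d (T x0) (Nat.iter (2 * n) T x0) <= K).
  { intro n. apply (Rmult_le_reg_l (1 - k)); [lra |]. unfold K.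
    replace ((1 - k) * ((2 * D0 + delta) / (1 - k))) with (2 * D0 + delta) by (field; lra).
    destruct n as [| n].
    - simpl. rewrite (dist_sym Hd). fold D0. nra.
    - rewrite iter_even_succ.
      pose proof (image_distance_bound x0 (Nat.iter (2 * n + 1) T x0) D0
        (or_introl (conj Ax0 (proj2 (parity_iter x0 n Ax0)))) ltac:(unfold D0; lra)
        (step_bound x0 (2 * n + 1) (or_introl Ax0))).
      nra. }
  assert (HK0 : 0 <= K) by (unfold K; apply Rmult_le_pos; [lra | left; apply Rinv_0_lt_compat; lra]).
  exists (2 * K + D0). split; [lra | split].
  - intros m n. pose proof (dist_triangle Hd (Nat.iter (2 * m) T x0) (T x0) (Nat.iter (2 * n) T x0)).
    rewrite (dist_sym Hd _ (T x0)) in *. pose proof (HK m). pose proof (HK n). lra.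
  - intros m n. set (q := Nat.iter (2 * n + 1) T x0).
    pose proof (dist_triangle Hd (Nat.iter (2 * m) T x0) (T x0) q).
    pose proof (dist_triangle Hd (T x0) (T q) q).
    assert (Hq : d q (T q) <= D0) by exact (step_bound x0 (2 * n + 1) (or_introl Ax0)).
    rewrite (dist_sym Hd _ (T x0)), (dist_sym Hd (T q)) in *.
    unfold q in *. rewrite <- iter_even_succ in *.
    pose proof (HK m). pose proof (HK (S n)). lra.
Qed.

Lemma orbit_cross_close x0 : A x0 -> forall eps, 0 < eps ->
  exists N, forall m n, (N <= m)%nat -> (N <= n)%nat ->
    d (Nat.iter (2 * m) T x0) (Nat.iter (2 * n + 1) T x0) < delta + eps.
Proof.
  intros Ax0 eps Heps.
  destruct (even_orbit_bounded x0 Ax0) as [E [HE0 [_ Hcross]]].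
  pose proof delta_nonneg. pose proof (dist_nonneg Hd x0 (T x0)).
  destruct (geometric_small k E eps ltac:(lra) ltac:(lra) Heps) as [N HN].
  exists N. intros m n Hm Hn.
  set (p := Nat.iter (2 * (m - N)) T x0). set (q := Nat.iter (2 * (n - N) + 1) T x0).
  assert (Hpq : opposite A B p q)
    by (left; split; [apply (parity_iter x0 (m - N)) | apply (parity_iter x0 (n - N))]; exact Ax0).
  assert (Hp : d p (T p) <= delta + E)
    by (pose proof (step_bound x0 (2 * (m - N)) (or_introl Ax0)); unfold p; simpl in *; lra).
  assert (Hq : d q (T q) <= delta + E)
    by (pose proof (step_bound x0 (2 * (n - N) + 1) (or_introl Ax0)); unfold q; simpl in *; lra).
  pose proof (pair_decay p q E Hpq ltac:(lra) (Hcross _ _) Hp Hq (2 * N)) as Hj.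
  unfold p, q in Hj. rewrite <- !Nat.iter_add in Hj.
  replace (2 * N + 2 * (m - N))%nat with (2 * m)%nat in Hj by lia.
  replace (2 * N + (2 * (n - N) + 1))%nat with (2 * n + 1)%nat in Hj by lia.
  specialize (HN (2 * N)%nat (Nat.le_add_r _ _)). lra.
Qed.

Lemma bpp_of_approximation x : A x \/ B x ->
  (forall eps, 0 < eps -> exists q, opposite A B q x /\ d q x <= delta + eps /\
     d q (T q) <= delta + eps /\ d x (T q) <= eps) ->
  d x (T x) = delta.
Proof.
  intros Hx Happrox. set (s := d x (T x)).
  assert (Hlow : delta <= s) by exact (delta_le_opposite _ _ (opposite_step x Hx)).
  assert (Hgap : (1 - k) * (s - delta) <= 0).
  { apply Rle_plus_epsilon. intros eps Heps.
    destruct (Happrox eps Heps) as [q [Hqx [H1 [H2 H3]]]].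
    pose proof (dist_triangle Hd x (T q) (T x)) as Htri. fold s in Htri.
    destruct (Rle_dec s (delta + eps)).
    - nra.
    - pose proof (contraction_le q x s Hqx ltac:(lra) ltac:(lra) ltac:(unfold s; lra)).
      rewrite (dist_sym Hd (T q) (T x)) in *. lra. }
  nra.
Qed.

Lemma even_orbit_limit_bpp x0 x : A x0 -> A x ->
  converges d (fun n => Nat.iter (2 * n) T x0) x -> d x (T x) = delta.
Proof.
  intros Ax0 Ax Hconv. apply bpp_of_approximation; [now left |].
  intros eps Heps.
  destruct (Hconv (eps / 2) ltac:(lra)) as [N1 HN1].
  pose proof (dist_nonneg Hd x0 (T x0)).
  pose proof (delta_le_opposite _ _ (opposite_step x0 (or_introl Ax0))).
  destruct (geometric_small k (d x0 (T x0) - delta) (eps / 2) ltac:(lra) ltac:(lra) ltac:(lra))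
    as [N2 HN2].
  set (n := (N1 + N2)%nat). set (q := Nat.iter (2 * n + 1) T x0).
  assert (Hclose_q : d q (T q) <= delta + eps / 2).
  { pose proof (step_decay x0 (2 * n + 1) (or_introl Ax0)).
    pose proof (HN2 (2 * n + 1)%nat ltac:(unfold n; lia)). unfold q; simpl in *; lra. }
  assert (Hclose_u : d (Nat.iter (2 * n) T x0) q <= delta + eps / 2).
  { pose proof (step_decay x0 (2 * n) (or_introl Ax0)).
    pose proof (HN2 (2 * n)%nat ltac:(unfold n; lia)). unfold q. rewrite iter_odd. simpl in *; lra. }
  exists q. split; [right; split; [apply (parity_iter x0 n Ax0) | exact Ax] |].
  split; [| split; [lra |]].
  - pose proof (dist_triangle Hd q (Nat.iter (2 * n) T x0) x) as Htri.
    pose proof (HN1 n ltac:(unfold n; lia)) as Hun. cbv beta in Hun.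
    rewrite (dist_sym Hd q (Nat.iter (2 * n) T x0)) in Htri. lra.
  - unfold q. rewrite <- iter_even_succ, (dist_sym Hd).
    pose proof (HN1 (S n) ltac:(unfold n; lia)). lra.
Qed.

Lemma bpp_image x : A x \/ B x -> d x (T x) = delta -> d (T x) (T (T x)) = delta.
Proof.
  intros Hx Hbpp. pose proof (step_contraction x Hx).
  pose proof (delta_le_opposite _ _ (opposite_step (T x) ltac:(destruct Hcyc, Hx; auto))).
  rewrite Hbpp in *. nra.
Qed.

Hypothesis Hbuc : BUC d A B.

Lemma bpp_period_two x : A x -> d x (T x) = delta -> T (T x) = x.
Proof.
  intros Ax Hbpp. destruct Hcyc as [HA HB].
  apply (BUC_proximal_unique Hd Hdist Hbuc _ _ (T x)); auto.
  rewrite (dist_sym Hd). exact (bpp_image x (or_introl Ax) Hbpp).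
Qed.

(* With a := d(x,Ty) and b := d(Tx,y) the contraction gives a - delta <= k (b - delta)
   and b - delta <= k (a - delta), so a = delta and BUC identifies x and y. *)
Lemma bpp_unique x y : A x -> A y -> d x (T x) = delta -> d y (T y) = delta -> x = y.
Proof.
  intros Ax Ay Hx Hy. destruct Hcyc as [HA HB].
  pose proof (bpp_period_two x Ax Hx) as Px. pose proof (bpp_period_two y Ay Hy) as Py.
  pose proof (bpp_image x (or_introl Ax) Hx) as Hx2.
  pose proof (bpp_image y (or_introl Ay) Hy) as Hy2.
  set (a := d x (T y)). set (b := d (T x) y).
  assert (Ha : delta <= a) by (apply delta_le_opposite; left; auto).
  assert (Hb : delta <= b) by (apply delta_le_opposite; right; auto).
  assert (Hab : a <= k * b + (1 - k) * delta).
  { pose proof (contraction_le (T x) y b ltac:(right; auto) ltac:(unfold b; lra)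
      ltac:(lra) ltac:(lra)) as H. rewrite Px in H. exact H. }
  assert (Hba : b <= k * a + (1 - k) * delta).
  { pose proof (contraction_le x (T y) a ltac:(left; auto) ltac:(unfold a; lra)
      ltac:(lra) ltac:(lra)) as H. rewrite Py in H. exact H. }
  assert (Ha_eq : a = delta) by nra.
  exact (BUC_proximal_unique Hd Hdist Hbuc x y (T y) Ax Ay (HA y Ay) Ha_eq Hy).
Qed.

Lemma even_orbit_converges x0 : complete_metric d -> closed_subset d A -> A x0 ->
  exists x, A x /\ d x (T x) = delta /\ converges d (fun n => Nat.iter (2 * n) T x0) x.
Proof.
  intros Hcomplete Hclosed Ax0.
  set (u := fun n => Nat.iter (2 * n) T x0).
  assert (Au : forall n, A (u n)) by (intro n; apply (parity_iter x0 n Ax0)).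
  assert (Hcauchy : cauchy_seq d u).
  { destruct (even_orbit_bounded x0 Ax0) as [E [_ [Hbd _]]].
    apply (BUC_cauchy Hd Hdist Hbuc u (fun n => Nat.iter (2 * n + 1) T x0) Au).
    - intro n. apply (parity_iter x0 n Ax0).
    - exists E. exact Hbd.
    - exact (orbit_cross_close x0 Ax0). }
  destruct (Hcomplete u Hcauchy) as [x Hx].
  assert (Ax : A x) by exact (Hclosed u x Au Hx).
  exists x. split; [exact Ax | split; [| exact Hx]].
  exact (even_orbit_limit_bpp x0 x Ax0 Ax Hx).
Qed.

End CyclicOrbits.

Theorem theorem33 (X : Type) (d : X -> X -> R) (A B : X -> Prop) (T : X -> X)
  (k delta : R) :
  is_metric d -> complete_metric d ->
  nonempty A -> nonempty B -> closed_subset d A -> closed_subset d B ->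
  BUC d A B ->
  cyclic_map A B T ->
  0 < k < 1 ->
  is_dist d A B delta ->
  (forall x y, A x -> B y ->
     d (T x) (T y) <= k * Rmax (d x y) (Rmax (d x (T x)) (d y (T y))) + (1 - k) * delta) ->
  (exists x, A x /\ d x (T x) = delta /\
     (forall x', A x' -> d x' (T x') = delta -> x' = x) /\
     (forall x0, A x0 -> converges d (fun n => Nat.iter (2 * n) T x0) x)) /\
  (exists y, B y /\ d y (T y) = delta) /\
  (BUC d B A -> forall y1 y2, B y1 -> B y2 ->
     d y1 (T y1) = delta -> d y2 (T y2) = delta -> y1 = y2).
Proof.
  intros Hd Hcomplete [x0 Ax0] _ HclosedA _ Hbuc Hcyc Hk Hdist HAB.
  pose proof (cyclic_contraction_of_AB d A B T k delta Hd HAB) as Hcontr.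
  destruct (even_orbit_converges Hd Hcyc Hk Hdist Hcontr Hbuc x0 Hcomplete HclosedA Ax0)
    as [x [Ax [Hx _]]].
  split; [| split].
  - exists x. split; [exact Ax | split; [exact Hx | split]].
    + intros x' Ax' Hx'. exact (bpp_unique Hd Hcyc Hk Hdist Hcontr Hbuc x' x Ax' Ax Hx' Hx).
    + intros x1 Ax1.
      destruct (even_orbit_converges Hd Hcyc Hk Hdist Hcontr Hbuc x1 Hcomplete HclosedA Ax1)
        as [x' [Ax' [Hx' Hconv]]].
      rewrite <- (bpp_unique Hd Hcyc Hk Hdist Hcontr Hbuc x' x Ax' Ax Hx' Hx). exact Hconv.
  - exists (T x). split; [exact (proj1 Hcyc x Ax) |].
    exact (bpp_image Hd Hcyc Hk Hdist Hcontr x (or_introl Ax) Hx).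
  - intros HbucBA y1 y2 By1 By2 Hy1 Hy2.
    exact (bpp_unique Hd (cyclic_map_swap A B T Hcyc) Hk (is_dist_swap d A B delta Hd Hdist)
      (cyclic_contraction_swap d A B T k delta Hcontr) HbucBA y1 y2 By1 By2 Hy1 Hy2).
Qed.
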